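(* Let $(\lambda_n)_{n\in\mathbb{N}_0}$ be real numbers with $\limsup_{n\to\infty}|\lambda_n|/n\le\beta$ for some $\beta>0$. Let $\gamma>0$, $f\in C^\infty[x_0,x_0+\gamma]$, and suppose there are constants $C>0$, $\sigma>0$ with $|D^{(2n)}f(t)|\le C(2n)!\sigma^{2n}$ for all $t\in[x_0,x_0+\gamma]$ and all $n\in\mathbb{N}_0$. Then for every $\varepsilon>0$ there exist constants $C_2>0$ and $\delta\in(0,\gamma)$ such that $$|D^{(2n+1)}f(t)|\le C_2(2n+1)!(\sigma+\varepsilon)^{2n+1}$$ for all $t\in[x_0,x_0+\delta]$ and all $n\in\mathbb{N}_0$.
   Context: For a sequence $(\lambda_n)$ and a smooth function $f$, $D^{(n)}f=(\frac{d}{dt}-\lambda_0)\cdots(\frac{d}{dt}-\lambda_{n-1})f$ with $D^{(0)}f=f$ (one-sided derivatives at endpoints). $f$ may be complex-valued. *)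

From Stdlib Require Import Reals Lra Lia.
Open Scope R_scope.

Definition has_deriv_on (a b : R) (g g' : R -> R) : Prop :=
  forall t, a <= t <= b ->
    forall eps, 0 < eps -> exists d, 0 < d /\
      forall s, a <= s <= b -> s <> t -> Rabs (s - t) < d ->
        Rabs ((g s - g t) / (s - t) - g' t) < eps.

(* F is the sequence of successive derivatives F k = g^(k) of a C^infty
   function g = F 0 on [a,b]. *)
Definition derivs_on (a b : R) (F : nat -> R -> R) : Prop :=
  forall k, has_deriv_on a b (F k) (F (S k)).

(* Coefficients of prod_{i<n} (X - lam i) : c n k is the coeff of X^k. *)
Fixpoint Dcoef (lam : nat -> R) (n k : nat) : R :=
  match n with
  | O => match k with O => 1 | S _ => 0 end
  | S m => match k with
           | O => - lam m * Dcoef lam m O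
           | S k' => Dcoef lam m k' - lam m * Dcoef lam m k
           end
  end.

(* D^(n) f = (d/dt - lam 0) ... (d/dt - lam (n-1)) f, expressed through the
   derivatives F k = f^(k):  sum_{k=0}^n c n k * f^(k). *)
Definition Dop (lam : nat -> R) (F : nat -> R -> R) (n : nat) (t : R) : R :=
  sum_f_R0 (fun k => Dcoef lam n k * F k t) n.

Definition cmod (x y : R) : R := sqrt (x ^ 2 + y ^ 2).

From Stdlib Require Import Reals Factorial Lra Lia.
Open Scope R_scope.

(* With [g = D^(2n) f], [u = D^(2n+1) f], [w = D^(2n+2) f] one has
   [g' = u + lam_(2n) g] and [u' = w + lam_(2n+1) u].  Two mean value theorems
   with integrating factors on a window [[t, t + h]] give
   [|u t| <= c (|g| / h + h |w|)]; the choice [h ~ 1 / ((2n+2) sigma)] makes both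
   terms [O((2n+1)! sigma^(2n+1))], and since [|lam_m| = O(m)] the integrating
   factors [exp (|lam| h)] stay bounded uniformly in [n].  This even gives the
   bound with [sigma] itself on [[x0, x0 + gamma / 2]]; the real and imaginary
   parts are estimated separately. *)

Lemma has_deriv_on_plus a b f f' g g' :
  has_deriv_on a b f f' -> has_deriv_on a b g g' ->
  has_deriv_on a b (fun x => f x + g x) (fun x => f' x + g' x).
Proof.
  intros Hf Hg t Ht eps Heps.
  destruct (Hf t Ht (eps / 2)) as [d1 [Hd1 Df]]; [lra|].
  destruct (Hg t Ht (eps / 2)) as [d2 [Hd2 Dg]]; [lra|].
  exists (Rmin d1 d2); split; [apply Rmin_pos; assumption|].
  intros s Hs Hst Hsd.
  specialize (Df s Hs Hst (Rlt_le_trans _ _ _ Hsd (Rmin_l _ _))).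
  specialize (Dg s Hs Hst (Rlt_le_trans _ _ _ Hsd (Rmin_r _ _))).
  replace ((f s + g s - (f t + g t)) / (s - t) - (f' t + g' t))
    with (((f s - f t) / (s - t) - f' t) + ((g s - g t) / (s - t) - g' t))
    by (field; lra).
  eapply Rle_lt_trans; [apply Rabs_triang|]. lra.
Qed.

Lemma has_deriv_on_scal a b c f f' :
  has_deriv_on a b f f' ->
  has_deriv_on a b (fun x => c * f x) (fun x => c * f' x).
Proof.
  intros Hf t Ht eps Heps.
  assert (Hc : 0 < Rabs c + 1) by (pose proof (Rabs_pos c); lra).
  destruct (Hf t Ht (eps / (Rabs c + 1))) as [d [Hd Df]];
    [apply Rdiv_lt_0_compat; assumption|].
  exists d; split; [assumption|].
  intros s Hs Hst Hsd.
  specialize (Df s Hs Hst Hsd).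
  replace ((c * f s - c * f t) / (s - t) - c * f' t)
    with (c * ((f s - f t) / (s - t) - f' t)) by (field; lra).
  rewrite Rabs_mult.
  assert (eps / (Rabs c + 1) * (Rabs c + 1) = eps) by (field; lra).
  pose proof (Rabs_pos c). pose proof (Rabs_pos ((f s - f t) / (s - t) - f' t)).
  nra.
Qed.

Lemma has_deriv_on_sum a b (F F' : nat -> R -> R) N :
  (forall k, has_deriv_on a b (F k) (F' k)) ->
  has_deriv_on a b (fun x => sum_f_R0 (fun k => F k x) N)
                   (fun x => sum_f_R0 (fun k => F' k x) N).
Proof.
  intros HF; induction N as [|N IH]; simpl; [apply HF|].
  exact (has_deriv_on_plus _ _ _ _ _ _ IH (HF (S N))).
Qed.

Lemma Dcoef_gt lam n k : (n < k)%nat -> Dcoef lam n k = 0.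
Proof.
  revert k; induction n as [|n IH]; intros [|k] Hk; try lia; [reflexivity|].
  simpl. rewrite (IH k), (IH (S k)) by lia. ring.
Qed.

Lemma Dop_split0 lam F n t :
  Dop lam F n t = Dcoef lam n 0 * F 0%nat t
                  + sum_f_R0 (fun k => Dcoef lam n (S k) * F (S k) t) n.
Proof.
  unfold Dop.
  replace (sum_f_R0 (fun k => Dcoef lam n k * F k t) n)
    with (sum_f_R0 (fun k => Dcoef lam n k * F k t) (S n))
    by (rewrite tech5, Dcoef_gt by lia; ring).
  rewrite decomp_sum by lia. reflexivity.
Qed.

(* The recursion of [Dcoef] is the product rule
   [D^(n+1) = (d/dt - lam n) D^(n)], read on coefficients. *)
Lemma Dop_S lam F n t :
  Dop lam F (S n) t + lam n * Dop lam F n t =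
  sum_f_R0 (fun k => Dcoef lam n k * F (S k) t) n.
Proof.
  rewrite (Dop_split0 lam F n t).
  unfold Dop. rewrite decomp_sum by lia. simpl pred.
  replace (sum_f_R0 (fun k => Dcoef lam (S n) (S k) * F (S k) t) n)
    with (sum_f_R0 (fun k => Dcoef lam n k * F (S k) t) n
          - lam n * sum_f_R0 (fun k => Dcoef lam n (S k) * F (S k) t) n).
  - simpl Dcoef at 1. ring.
  - rewrite scal_sum, <- minus_sum. apply sum_eq. intros k _. simpl. ring.
Qed.

Lemma has_deriv_on_Dop a b lam F n : derivs_on a b F ->
  has_deriv_on a b (Dop lam F n)
    (fun t => Dop lam F (S n) t + lam n * Dop lam F n t).
Proof.
  intros HF t Ht. setoid_rewrite Dop_S.
  apply (has_deriv_on_sum a b (fun k x => Dcoef lam n k * F k x)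
                               (fun k x => Dcoef lam n k * F (S k) x)); [|exact Ht].
  intros k; apply has_deriv_on_scal, HF.
Qed.

(* Extending a function on [[a, b]] constantly to [R] turns the one-sided
   derivatives of [has_deriv_on] into the hypotheses of the Stdlib [MVT]. *)
Definition clamp a b s := Rmax a (Rmin b s).

Lemma clamp_id a b s : a <= s <= b -> clamp a b s = s.
Proof. intros. unfold clamp. rewrite Rmin_right by lra. apply Rmax_right; lra. Qed.

Lemma clamp_in a b s : a <= b -> a <= clamp a b s <= b.
Proof. intros. unfold clamp, Rmax, Rmin. repeat destruct Rle_dec; lra. Qed.

Lemma clamp_dist a b s t : a <= t <= b -> Rabs (clamp a b s - t) <= Rabs (s - t).
Proof. intros. unfold clamp, Rmax, Rmin. repeat destruct Rle_dec; split_Rabs; lra. Qed.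

Lemma has_deriv_on_lipschitz_at a b g g' t : has_deriv_on a b g g' -> a <= t <= b ->
  exists d, 0 < d /\ forall s, a <= s <= b -> Rabs (s - t) < d ->
    Rabs (g s - g t) <= (Rabs (g' t) + 1) * Rabs (s - t).
Proof.
  intros Hg Ht. destruct (Hg t Ht 1) as [d [Hd Dg]]; [lra|].
  exists d; split; [assumption|]. intros s Hs Hsd.
  destruct (Req_dec s t) as [->|Hst].
  - rewrite !Rminus_diag, Rabs_R0. lra.
  - specialize (Dg s Hs Hst Hsd).
    replace (g s - g t) with (((g s - g t) / (s - t) - g' t) * (s - t) + g' t * (s - t))
      by (field; lra).
    eapply Rle_trans; [apply Rabs_triang|]. rewrite !Rabs_mult.
    pose proof (Rabs_pos (s - t)). pose proof (Rabs_pos (g' t)). nra.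
Qed.

Lemma continuity_pt_clamp a b g g' t : a <= b -> has_deriv_on a b g g' -> a <= t <= b ->
  continuity_pt (fun s => g (clamp a b s)) t.
Proof.
  intros Hab Hg Ht.
  destruct (has_deriv_on_lipschitz_at a b g g' t Hg Ht) as [d [Hd Lip]].
  set (K := Rabs (g' t) + 1).
  assert (HK : 0 < K) by (pose proof (Rabs_pos (g' t)); unfold K; lra).
  intros eps Heps. exists (Rmin d (eps / K)). split.
  { apply Rmin_pos; [assumption|]. apply Rdiv_lt_0_compat; assumption. }
  intros x [_ Hx]. simpl in *. unfold R_dist in *. rewrite (clamp_id a b t) by lra.
  pose proof (clamp_dist a b x t Ht).
  pose proof (Rmin_l d (eps / K)). pose proof (Rmin_r d (eps / K)).
  specialize (Lip (clamp a b x) (clamp_in a b x Hab) ltac:(lra)).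
  assert (eps / K * K = eps) by (field; lra).
  pose proof (Rabs_pos (clamp a b x - t)).
  fold K in Lip. nra.
Qed.

Lemma derivable_pt_lim_clamp a b g g' t : has_deriv_on a b g g' -> a < t < b ->
  derivable_pt_lim (fun s => g (clamp a b s)) t (g' t).
Proof.
  intros Hg Ht eps Heps.
  destruct (Hg t ltac:(lra) eps Heps) as [d [Hd Dg]].
  assert (Hp : 0 < Rmin d (Rmin (t - a) (b - t))) by (repeat apply Rmin_pos; lra).
  exists (mkposreal _ Hp). simpl. intros h Hh Hhd.
  pose proof (Rmin_l d (Rmin (t - a) (b - t))). pose proof (Rmin_r d (Rmin (t - a) (b - t))).
  pose proof (Rmin_l (t - a) (b - t)). pose proof (Rmin_r (t - a) (b - t)).
  assert (Hin : a <= t + h <= b) by (split_Rabs; lra).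
  rewrite !clamp_id by lra.
  specialize (Dg (t + h) Hin ltac:(lra)).
  replace (t + h - t) with h in Dg by ring. apply Dg. lra.
Qed.

Lemma mvt_interior (f f' : R -> R) p q : p < q ->
  (forall c, p < c < q -> derivable_pt_lim f c (f' c)) ->
  (forall c, p <= c <= q -> continuity_pt f c) ->
  exists c, p < c < q /\ f q - f p = f' c * (q - p).
Proof.
  intros Hpq Hd Hc.
  assert (pr : forall c, p < c < q -> derivable_pt f c)
    by (intros c Hc'; exists (f' c); apply Hd, Hc').
  destruct (MVT f id p q pr (fun c _ => derivable_pt_id c) Hpq Hc
     (fun c _ => derivable_continuous_pt _ _ (derivable_pt_id c))) as [c [P E]].
  exists c; split; [assumption|].
  rewrite derive_pt_id, (derive_pt_eq_0 _ _ _ _ (Hd c P)) in E.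
  unfold id in E. lra.
Qed.

Lemma derivable_pt_lim_exp_affine k p x :
  derivable_pt_lim (fun s => exp (k * (s - p))) x (exp (k * (x - p)) * k).
Proof.
  assert (Hlin : derivable_pt_lim (fun s => k * (s - p)) x k).
  { intros eps Heps. exists (mkposreal _ Heps). intros h Hh _.
    replace ((k * (x + h - p) - k * (x - p)) / h - k) with 0 by (field; exact Hh).
    rewrite Rabs_R0; exact Heps. }
  exact (derivable_pt_lim_comp _ exp x _ _ Hlin (derivable_pt_lim_exp _)).
Qed.

(* Mean value theorem for the integrating factor [exp (- a (s - p))]:
   it turns [g' = u + a g] into [(e^{-a(s-p)} g)' = e^{-a(s-p)} u]. *)
Lemma weighted_mvt lo hi g u a p q :
  has_deriv_on lo hi g (fun s => u s + a * g s) -> lo <= p -> p < q -> q <= hi ->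
  exists c, p < c < q /\
    exp (- a * (q - p)) * g q - g p = exp (- a * (c - p)) * u c * (q - p).
Proof.
  intros Hg Hlo Hpq Hhi.
  destruct (mvt_interior (fun s => exp (- a * (s - p)) * g (clamp lo hi s))
                         (fun s => exp (- a * (s - p)) * u s) p q Hpq)
    as [c [Hc E]].
  - intros c Hc.
    assert (D := derivable_pt_lim_mult _ _ c _ _ (derivable_pt_lim_exp_affine (- a) p c)
                   (derivable_pt_lim_clamp lo hi g _ c Hg ltac:(lra))).
    cbv beta in D. rewrite clamp_id in D by lra.
    replace (exp (- a * (c - p)) * u c)
      with (exp (- a * (c - p)) * - a * g c + exp (- a * (c - p)) * (u c + a * g c))
      by ring.
    exact D.
  - intros c Hc. apply continuity_pt_mult.
    + apply derivable_continuous_pt. eexists. apply derivable_pt_lim_exp_affine.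
    + apply (continuity_pt_clamp lo hi g (fun s => u s + a * g s) c); [lra | exact Hg | lra].
  - exists c; split; [exact Hc|].
    rewrite !clamp_id, Rminus_diag, Rmult_0_r, exp_0 in E by lra. lra.
Qed.

Lemma exp_le_exp x y : x <= y -> exp x <= exp y.
Proof. intros [Hxy | ->]; [left; apply exp_increasing, Hxy | apply Rle_refl]. Qed.

Lemma exp_mul_le_exp_abs x y h : 0 <= y <= h -> exp (x * y) <= exp (Rabs x * h).
Proof.
  intros Hy. apply exp_le_exp.
  pose proof (Rle_abs x). pose proof (Rabs_pos x). nra.
Qed.

Lemma weighted_mvt_bound lo hi g u a t h B :
  has_deriv_on lo hi g (fun s => u s + a * g s) -> lo <= t -> 0 < h -> t + h <= hi ->
  (forall s, t <= s <= t + h -> Rabs (g s) <= B) ->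
  exists xi, t < xi < t + h /\
    Rabs (u xi) * h <= exp (Rabs a * h) * (exp (Rabs a * h) + 1) * B.
Proof.
  intros Hg Hlo Hh Hhi HB.
  destruct (weighted_mvt lo hi g u a t (t + h) Hg Hlo ltac:(lra) Hhi)
    as [xi [Hxi Eg]].
  exists xi; split; [exact Hxi|].
  replace (t + h - t) with h in Eg by ring.
  set (Ea := exp (Rabs a * h)).
  assert (Hdiff : Rabs (exp (- a * h) * g (t + h) - g t) <= (Ea + 1) * B).
  { eapply Rle_trans; [apply Rabs_triang|].
    rewrite Rabs_Ropp, Rabs_mult, (Rabs_pos_eq (exp _)) by (left; apply exp_pos).
    assert (exp (- a * h) <= Ea)
      by (unfold Ea; rewrite <- Rabs_Ropp; apply exp_mul_le_exp_abs; lra).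
    pose proof (HB t ltac:(lra)). pose proof (HB (t + h) ltac:(lra)).
    pose proof (exp_pos (- a * h)). pose proof (Rabs_pos (g (t + h))). nra. }
  replace (Rabs (u xi) * h)
    with (exp (a * (xi - t)) * Rabs (exp (- a * h) * g (t + h) - g t)).
  - assert (exp (a * (xi - t)) <= Ea) by (apply exp_mul_le_exp_abs; lra).
    pose proof (exp_pos (a * (xi - t))).
    pose proof (Rabs_pos (exp (- a * h) * g (t + h) - g t)).
    rewrite Rmult_assoc. apply Rmult_le_compat; lra.
  - rewrite Eg, !Rabs_mult, (Rabs_pos_eq (exp _)) by (left; apply exp_pos).
    rewrite (Rabs_pos_eq h), <- !Rmult_assoc, <- exp_plus by lra.
    replace (a * (xi - t) + - a * (xi - t)) with 0 by ring. rewrite exp_0. ring.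
Qed.

(* A Landau-type inequality: the weighted mean value theorem for [g] on
   [[t, t + h]] controls [u] at some [xi], and the one for [u] on [[t, xi]]
   carries this back to [t] at the cost of a [w]-term. *)
Lemma middle_derivative_bound lo hi g u w a b t h B W :
  has_deriv_on lo hi g (fun s => u s + a * g s) ->
  has_deriv_on lo hi u (fun s => w s + b * u s) ->
  lo <= t -> 0 < h -> t + h <= hi ->
  (forall s, t <= s <= t + h -> Rabs (g s) <= B) ->
  (forall s, t <= s <= t + h -> Rabs (w s) <= W) ->
  let E := exp ((Rabs a + Rabs b) * h) in
  Rabs (u t) <= E * (E + 1) * B / h + E * h * W.
Proof.
  intros Hg Hu Hlo Hh Hhi HB HW E.
  destruct (weighted_mvt_bound lo hi g u a t h B Hg Hlo Hh Hhi HB) as [xi [Hxi Uxi]].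
  destruct (weighted_mvt lo hi u w b t xi Hu Hlo ltac:(lra) ltac:(lra))
    as [eta [Heta Eu]].
  set (p := xi - t) in *. set (q := eta - t) in *.
  assert (Hp : 0 < p < h) by (unfold p; lra).
  assert (Hq : 0 < q < p) by (unfold q, p; lra).
  pose proof (Rabs_pos a). pose proof (Rabs_pos b).
  assert (HBt := HB t ltac:(lra)). pose proof (Rabs_pos (g t)).
  assert (HWeta := HW eta ltac:(unfold q, p in *; lra)). pose proof (Rabs_pos (w eta)).
  set (Ea := exp (Rabs a * h)) in Uxi. set (Eb := exp (Rabs b * h)).
  assert (HE : E = Ea * Eb) by (unfold E, Ea, Eb; rewrite <- exp_plus; f_equal; ring).
  assert (HEa : 1 <= Ea) by (rewrite <- exp_0; apply exp_le_exp; nra).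
  assert (HEb : 1 <= Eb) by (rewrite <- exp_0; apply exp_le_exp; nra).
  replace (u t) with (exp (- b * p) * u xi - exp (- b * q) * w eta * p) by lra.
  eapply Rle_trans; [apply Rabs_triang|].
  rewrite Rabs_Ropp, !Rabs_mult, !(Rabs_pos_eq (exp _)) by (left; apply exp_pos).
  rewrite (Rabs_pos_eq p) by lra.
  assert (exp (- b * p) <= Eb)
    by (unfold Eb; rewrite <- Rabs_Ropp; apply exp_mul_le_exp_abs; lra).
  assert (exp (- b * q) <= Eb)
    by (unfold Eb; rewrite <- Rabs_Ropp; apply exp_mul_le_exp_abs; lra).
  pose proof (exp_pos (- b * p)). pose proof (exp_pos (- b * q)).
  rewrite HE. apply Rplus_le_compat.
  - apply (Rmult_le_reg_r h); [lra|].
    replace (Ea * Eb * (Ea * Eb + 1) * B / h * h) with (Ea * Eb * (Ea * Eb + 1) * B)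
      by (field; lra).
    pose proof (Rabs_pos (u xi)).
    rewrite Rmult_assoc.
    apply Rle_trans with (Eb * (Ea * (Ea + 1) * B)); [apply Rmult_le_compat; nra|].
    assert (0 <= Ea * Ea * Eb * B * (Eb - 1)) by (repeat apply Rmult_le_pos; lra).
    nra.
  - apply Rle_trans with (Eb * W * h).
    + apply Rmult_le_compat; [nra | lra | apply Rmult_le_compat; lra | lra].
    + assert (0 <= Eb * W * h) by (repeat apply Rmult_le_pos; lra). nra.
Qed.

Lemma bounded_on_prefix (v : nat -> R) N :
  exists M, forall m, (m <= N)%nat -> Rabs (v m) <= M.
Proof.
  induction N as [|N [M HM]].
  - exists (Rabs (v 0%nat)). intros m Hm. replace m with 0%nat by lia. apply Rle_refl.
  - exists (Rmax M (Rabs (v (S N)))). intros m Hm.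
    destruct (Nat.eq_dec m (S N)) as [->|Hne]; [apply Rmax_r|].
    eapply Rle_trans; [apply HM; lia | apply Rmax_l].
Qed.

Lemma linear_growth_of_limsup (lam : nat -> R) beta :
  (forall e, 0 < e -> exists N : nat, forall n : nat, (N <= n)%nat ->
     Rabs (lam n) / INR n <= beta + e) ->
  exists L, forall m, Rabs (lam m) <= L * (INR m + 1).
Proof.
  intros Hlim. destruct (Hlim 1 Rlt_0_1) as [N HN].
  destruct (bounded_on_prefix lam N) as [M HM].
  exists (Rabs beta + 1 + Rabs M). intros m.
  pose proof (pos_INR m). pose proof (Rabs_pos beta). pose proof (Rabs_pos M).
  pose proof (Rle_abs beta). pose proof (Rle_abs M).
  destruct (Compare_dec.le_lt_dec m N) as [Hm|Hm].
  - specialize (HM m Hm). nra.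
  - assert (Hpos : 0 < INR m) by (apply lt_0_INR; lia).
    specialize (HN m ltac:(lia)).
    assert (Rabs (lam m) <= (beta + 1) * INR m).
    { apply (Rmult_le_compat_r (INR m)) in HN; [|lra].
      unfold Rdiv in HN. rewrite Rmult_assoc, Rinv_l, Rmult_1_r in HN by lra. exact HN. }
    nra.
Qed.

Definition odd_const (E0 gamma sigma : R) : R :=
  E0 * ((E0 + 1) * (2 + 2 / (gamma * sigma)) + 1).

(* The step [h ~ 1 / (k sigma)] balances the two terms of
   [middle_derivative_bound]; [gamma / 2] keeps the window inside the interval. *)
Definition step_size (gamma sigma k : R) : R := Rmin (gamma / 2) (/ ((k + 1) * sigma)).

Lemma step_size_spec gamma sigma k : 0 < gamma -> 0 < sigma -> 0 <= k ->
  let h := step_size gamma sigma k in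
  0 < h /\ h <= gamma / 2 /\ / h <= 2 / gamma + (k + 1) * sigma /\
  h * ((k + 1) * sigma) <= 1.
Proof.
  intros Hg Hs Hk h.
  assert (Hks : 0 < (k + 1) * sigma) by nra.
  assert (0 < / ((k + 1) * sigma)) by (apply Rinv_0_lt_compat; lra).
  assert (h <= gamma / 2) by apply Rmin_l.
  assert (Hr : h <= / ((k + 1) * sigma)) by apply Rmin_r.
  assert (Hh : 0 < h) by (apply Rmin_pos; lra).
  repeat split; try assumption.
  - unfold h, step_size, Rmin. destruct Rle_dec.
    + replace (/ (gamma / 2)) with (2 / gamma) by (field; lra). nra.
    + rewrite Rinv_inv. assert (0 < 2 / gamma) by (apply Rdiv_lt_0_compat; lra). lra.
  - apply (Rmult_le_compat_r ((k + 1) * sigma)) in Hr; [|lra].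
    rewrite Rinv_l in Hr by lra. exact Hr.
Qed.

Lemma step_size_estimate E E0 M k sigma gamma :
  0 < E <= E0 -> 0 <= M -> 1 <= k -> 0 < sigma -> 0 < gamma ->
  let h := step_size gamma sigma k in
  E * (E + 1) * (M / (k * sigma)) / h + E * h * (M * (k + 1) * sigma)
    <= odd_const E0 gamma sigma * M.
Proof.
  intros HE HM Hk Hs Hg h.
  destruct (step_size_spec gamma sigma k Hg Hs ltac:(lra)) as [Hh [_ [Hinv Hh1]]].
  fold h in Hh, Hinv, Hh1.
  assert (Hratio : (2 / gamma + (k + 1) * sigma) / (k * sigma) <= 2 + 2 / (gamma * sigma)).
  { apply (Rmult_le_reg_r (k * sigma)); [nra|].
    replace ((2 / gamma + (k + 1) * sigma) / (k * sigma) * (k * sigma))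
      with (2 / gamma + (k + 1) * sigma) by (field; lra).
    replace ((2 + 2 / (gamma * sigma)) * (k * sigma)) with (2 * k * sigma + k * (2 / gamma))
      by (field; lra).
    assert (0 < 2 / gamma) by (apply Rdiv_lt_0_compat; lra). nra. }
  assert (HMk : 0 <= M / (k * sigma))
    by (apply Rmult_le_pos; [lra | left; apply Rinv_0_lt_compat; nra]).
  assert (First : M / (k * sigma) / h <= M * (2 + 2 / (gamma * sigma))).
  { replace (M / (k * sigma) / h) with (/ h * (M / (k * sigma))) by (field; nra).
    apply Rle_trans with ((2 / gamma + (k + 1) * sigma) * (M / (k * sigma))).
    - apply Rmult_le_compat_r; assumption.
    - replace ((2 / gamma + (k + 1) * sigma) * (M / (k * sigma)))
        with (M * ((2 / gamma + (k + 1) * sigma) / (k * sigma))) by (field; lra).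
      apply Rmult_le_compat_l; assumption. }
  assert (Second : h * (M * (k + 1) * sigma) <= M).
  { replace (h * (M * (k + 1) * sigma)) with (M * (h * ((k + 1) * sigma))) by ring.
    pose proof (Rmult_le_compat_l M _ _ HM Hh1). lra. }
  unfold odd_const.
  replace (E * (E + 1) * (M / (k * sigma)) / h) with (E * (E + 1) * (M / (k * sigma) / h))
    by (field; nra).
  assert (0 <= 2 / (gamma * sigma)) by (left; apply Rdiv_lt_0_compat; nra).
  assert (0 <= E * (E + 1)) by nra.
  assert (E * (E + 1) <= E0 * (E0 + 1)) by nra.
  assert (0 <= M / (k * sigma) / h)
    by (apply Rmult_le_pos; [lra | left; apply Rinv_0_lt_compat; lra]).
  apply Rle_trans with (E0 * (E0 + 1) * (M * (2 + 2 / (gamma * sigma))) + E0 * M).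
  - rewrite (Rmult_assoc E h).
    apply Rplus_le_compat; apply Rmult_le_compat; try lra.
    apply Rmult_le_pos; [lra|]. apply Rmult_le_pos; nra.
  - lra.
Qed.

Lemma integrating_factor_le lam L gamma sigma m :
  (forall m, Rabs (lam m) <= L * (INR m + 1)) -> 0 < gamma -> 0 < sigma ->
  exp ((Rabs (lam m) + Rabs (lam (S m))) * step_size gamma sigma (INR (S m)))
    <= exp (2 * L / sigma).
Proof.
  intros Hlam Hg Hs. apply exp_le_exp.
  set (k := INR (S m)).
  destruct (step_size_spec gamma sigma k Hg Hs (pos_INR _)) as [Hh [_ [_ Hh1]]].
  set (h := step_size gamma sigma k) in *.
  pose proof (Hlam m) as Ha. pose proof (Hlam (S m)) as Hb.
  rewrite <- S_INR in Ha. fold k in Ha, Hb.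
  assert (HL : 0 <= L).
  { pose proof (Hlam 0%nat). pose proof (Rabs_pos (lam 0%nat)). simpl INR in *. lra. }
  assert (HLs : 0 <= 2 * L / sigma)
    by (apply Rmult_le_pos; [lra | left; apply Rinv_0_lt_compat, Hs]).
  apply Rle_trans with (2 * L * (k + 1) * h).
  - pose proof (pos_INR (S m)). apply Rmult_le_compat_r; lra.
  - replace (2 * L * (k + 1) * h) with (2 * L / sigma * (h * ((k + 1) * sigma)))
      by (field; lra).
    pose proof (Rmult_le_compat_l _ _ _ HLs Hh1). lra.
Qed.

Lemma Dop_odd_bound lam L x0 gamma F C sigma :
  (forall m, Rabs (lam m) <= L * (INR m + 1)) -> 0 < gamma -> 0 <= C -> 0 < sigma ->
  derivs_on x0 (x0 + gamma) F ->
  (forall n t, x0 <= t <= x0 + gamma ->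
     Rabs (Dop lam F (2 * n) t) <= C * INR (fact (2 * n)) * sigma ^ (2 * n)) ->
  forall n t, x0 <= t <= x0 + gamma / 2 ->
    Rabs (Dop lam F (2 * n + 1) t) <=
      odd_const (exp (2 * L / sigma)) gamma sigma
      * (C * INR (fact (2 * n + 1)) * sigma ^ (2 * n + 1)).
Proof.
  intros Hlam Hg HC Hs HF Heven n t Ht.
  replace (2 * n + 1)%nat with (S (2 * n)) by lia.
  set (k := INR (S (2 * n))).
  set (M := C * INR (fact (S (2 * n))) * sigma ^ S (2 * n)).
  assert (Hk : 1 <= k) by (unfold k; rewrite S_INR; pose proof (pos_INR (2 * n)); lra).
  destruct (step_size_spec gamma sigma k Hg Hs ltac:(lra)) as [Hh [Hhg _]].
  set (h := step_size gamma sigma k) in *.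
  assert (HB : C * INR (fact (2 * n)) * sigma ^ (2 * n) = M / (k * sigma)).
  { unfold M, k. rewrite fact_simpl, mult_INR. simpl pow.
    field. split; [lra|]. apply not_0_INR. lia. }
  assert (HW : C * INR (fact (2 * S n)) * sigma ^ (2 * S n) = M * (k + 1) * sigma).
  { replace (2 * S n)%nat with (S (S (2 * n))) by lia.
    unfold M, k. rewrite (fact_simpl (S (2 * n))), mult_INR, (S_INR (S (2 * n))).
    simpl pow. ring. }
  assert (HM : 0 <= M)
    by (unfold M; pose proof (pos_INR (fact (S (2 * n))));
        pose proof (pow_lt sigma (S (2 * n)) Hs);
        apply Rmult_le_pos; [apply Rmult_le_pos|]; lra).
  pose proof (integrating_factor_le lam L gamma sigma (2 * n) Hlam Hg Hs) as HE.
  fold k h in HE.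
  assert (Hgeven : forall s, t <= s <= t + h -> Rabs (Dop lam F (2 * n) s) <= M / (k * sigma)).
  { intros s Hst. rewrite <- HB. apply Heven. lra. }
  assert (Hwodd : forall s, t <= s <= t + h ->
            Rabs (Dop lam F (S (S (2 * n))) s) <= M * (k + 1) * sigma).
  { intros s Hst. rewrite <- HW. replace (S (S (2 * n))) with (2 * S n)%nat by lia.
    apply Heven. lra. }
  pose proof (middle_derivative_bound _ _ _ _ _ _ _ t h _ _
                (has_deriv_on_Dop _ _ lam F (2 * n) HF)
                (has_deriv_on_Dop _ _ lam F (S (2 * n)) HF)
                ltac:(lra) Hh ltac:(lra) Hgeven Hwodd) as Hmid.
  cbv zeta in Hmid.
  eapply Rle_trans; [exact Hmid|].
  apply step_size_estimate; [split; [apply exp_pos | exact HE] | exact HM | exact Hk | exact Hs | exact Hg].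
Qed.

Lemma Rabs_le_cmod_l x y : Rabs x <= cmod x y.
Proof.
  unfold cmod. rewrite <- (sqrt_pow2 (Rabs x)) by apply Rabs_pos.
  apply sqrt_le_1_alt. rewrite pow2_abs. pose proof (pow2_ge_0 y). lra.
Qed.

Lemma cmod_sym x y : cmod x y = cmod y x.
Proof. unfold cmod. f_equal. ring. Qed.

Lemma Rabs_le_cmod_r x y : Rabs y <= cmod x y.
Proof. rewrite cmod_sym. apply Rabs_le_cmod_l. Qed.

Lemma cmod_le_Rabs_plus x y : cmod x y <= Rabs x + Rabs y.
Proof.
  unfold cmod. pose proof (Rabs_pos x). pose proof (Rabs_pos y).
  rewrite <- (sqrt_pow2 (Rabs x + Rabs y)) by lra.
  apply sqrt_le_1_alt. rewrite <- (pow2_abs x), <- (pow2_abs y). nra.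
Qed.

Theorem mainTheorem9
  (lam : nat -> R) (beta : R) (hbeta : 0 < beta)
  (hlim : forall e, 0 < e -> exists N : nat, forall n : nat, (N <= n)%nat ->
            Rabs (lam n) / INR n <= beta + e)
  (x0 gamma : R) (hgamma : 0 < gamma)
  (Fr Fi : nat -> R -> R)
  (hFr : derivs_on x0 (x0 + gamma) Fr)
  (hFi : derivs_on x0 (x0 + gamma) Fi)
  (C sigma : R) (hC : 0 < C) (hsigma : 0 < sigma)
  (hbound : forall (n : nat) (t : R), x0 <= t <= x0 + gamma ->
     cmod (Dop lam Fr (2 * n) t) (Dop lam Fi (2 * n) t)
       <= C * INR (fact (2 * n)) * sigma ^ (2 * n)) :
  forall eps, 0 < eps ->
    exists C2 delta, 0 < C2 /\ 0 < delta < gamma /\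
      forall (n : nat) (t : R), x0 <= t <= x0 + delta ->
        cmod (Dop lam Fr (2 * n + 1) t) (Dop lam Fi (2 * n + 1) t)
          <= C2 * INR (fact (2 * n + 1)) * (sigma + eps) ^ (2 * n + 1).
Proof.
  intros eps Heps.
  destruct (linear_growth_of_limsup lam beta hlim) as [L HL].
  set (K := odd_const (exp (2 * L / sigma)) gamma sigma).
  assert (HK : 0 < K).
  { unfold K, odd_const. pose proof (exp_pos (2 * L / sigma)).
    assert (0 < 2 / (gamma * sigma)) by (apply Rdiv_lt_0_compat; nra). nra. }
  exists (2 * K * C), (gamma / 2). split; [nra|]. split; [lra|].
  intros n t Ht.
  pose proof (Dop_odd_bound lam L x0 gamma Fr C sigma HL hgamma ltac:(lra) hsigma hFr
     (fun n t Ht => Rle_trans _ _ _ (Rabs_le_cmod_l _ _) (hbound n t Ht)) n t Ht) as Hr.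
  pose proof (Dop_odd_bound lam L x0 gamma Fi C sigma HL hgamma ltac:(lra) hsigma hFi
     (fun n t Ht => Rle_trans _ _ _ (Rabs_le_cmod_r _ _) (hbound n t Ht)) n t Ht) as Hi.
  fold K in Hr, Hi.
  pose proof (lt_0_INR _ (lt_O_fact (2 * n + 1))).
  assert (Hpow : sigma ^ (2 * n + 1) <= (sigma + eps) ^ (2 * n + 1)) by (apply pow_incr; lra).
  pose proof (pow_lt sigma (2 * n + 1) hsigma).
  eapply Rle_trans; [apply cmod_le_Rabs_plus|].
  apply Rle_trans with (2 * K * C * INR (fact (2 * n + 1)) * sigma ^ (2 * n + 1)); [lra|].
  apply Rmult_le_compat_l; [|exact Hpow].
  apply Rmult_le_pos; [|lra]. apply Rmult_le_pos; lra.
Qed.
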